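(* Define integer matrices $(a(i,j))_{i,j\ge1}$ and $(b(i,j))_{i,j\ge1}$ as follows. The first three rows are (entries listed for $j=1,2,\dots$; all further entries in these rows are $0$): \begin{itemize} \item $a(1,\cdot)=(10,-36,27)$; $a(2,\cdot)=(-8,306,-2160,5508,-5832,2187)$; $a(3,\cdot)=(1,-360,10566,-99144,423549,-944784,1141614,-708588,177147)$; \item $b(1,\cdot)=(-9,252,-891,729)$; $b(2,\cdot)=(1,-378,8613,-54675,138510,-150903,59049)$; $b(3,\cdot)=(0,147,-14553,312255,-2617839,10764414,-23914845,29288304,-18600435,4782969)$. \end{itemize} For $i\ge4$ and $j\ge1$, both $m=a$ and $m=b$ satisfy $$m(i,j)=30m(i-1,j-1)-108m(i-1,j-2)+81m(i-1,j-3)-12m(i-2,j-1)+9m(i-2,j-2)+m(i-3,j-1),$$ with $m(i,j)=0$ whenever $j\le0$. Then for all $i,j\ge1$, $$\pi(a(i,j))\ge\left\lfloor\frac{3j-i-1}{2}\right\rfloor,\qquad \pi(b(i,j))\ge\left\lfloor\frac{3j-i}{2}\right\rfloor.$$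
   Context: For an integer $n$, $\pi(n)$ denotes the $3$-adic order of $n$, with the convention $\pi(0)=\infty$. $\lfloor x\rfloor$ is the largest integer not exceeding $x$. *)

From Stdlib Require Import ZArith.
From mathcomp Require Import all_boot all_order all_algebra.
From mathcomp Require Import ssrZ.
Set Implicit Arguments. Unset Strict Implicit. Unset Printing Implicit Defensive.
Import Order.TTheory GRing.Theory Num.Theory.
Local Open Scope ring_scope.

(* Row given by a finite list of entries for j = 1, 2, ...; entry at j = 0
   (i.e. j <= 0) and beyond the list is 0. *)
(* Entries are written as binary integers Z (to avoid unary literals) and
   converted to int by int_of_Z. *)
Definition row_of (s : seq Z) (j : nat) : int :=
  if j is j'.+1 then int_of_Z (nth Z0 s j') else 0.

(* The matrix m(i,j) (i,j >= 1, i.e. nat i, j with index 0 meaning "<= 0")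
   with rows 1,2,3 given and the recurrence for i >= 4:
   m(i,j) = 30m(i-1,j-1) - 108m(i-1,j-2) + 81m(i-1,j-3) - 12m(i-2,j-1)
            + 9m(i-2,j-2) + m(i-3,j-1), and m(i,j) = 0 for j <= 0. *)
Fixpoint mrec (r1 r2 r3 : nat -> int) (i j : nat) {struct i} : int :=
  match i with
  | 0 => 0
  | 1 => r1 j
  | 2 => r2 j
  | 3 => r3 j
  | S ((S ((S ((S _) as p3)) as p2)) as p1) =>
      if j is 0 then 0 else
      30 * mrec r1 r2 r3 p1 (j - 1) - 108 * mrec r1 r2 r3 p1 (j - 2)
      + 81 * mrec r1 r2 r3 p1 (j - 3) - 12 * mrec r1 r2 r3 p2 (j - 1)
      + 9 * mrec r1 r2 r3 p2 (j - 2) + mrec r1 r2 r3 p3 (j - 1)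
  end.

Section Rows.
Local Open Scope Z_scope.
Definition row_a1 : seq Z := [:: 10; -36; 27].
Definition row_a2 : seq Z := [:: -8; 306; -2160; 5508; -5832; 2187].
Definition row_a3 : seq Z := [:: 1; -360; 10566; -99144; 423549; -944784; 1141614; -708588; 177147].
Definition row_b1 : seq Z := [:: -9; 252; -891; 729].
Definition row_b2 : seq Z := [:: 1; -378; 8613; -54675; 138510; -150903; 59049].
Definition row_b3 : seq Z := [:: 0; 147; -14553; 312255; -2617839; 10764414; -23914845;
                   29288304; -18600435; 4782969].
End Rows.

Definition a_mat : nat -> nat -> int :=
  mrec (row_of row_a1)
       (row_of row_a2)
       (row_of row_a3).

Definition b_mat : nat -> nat -> int :=
  mrec (row_of row_b1)
       (row_of row_b2)
       (row_of row_b3).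

(* 3-adic order pi(n); None encodes pi(0) = infinity. *)
Definition pi3 (n : int) : option nat :=
  if n == 0 then None else Some (logn 3 `|n|%N).

Definition pi3_ge (n : int) (k : int) : Prop :=
  match pi3 n with None => True | Some v => k <= v%:Z end.

(* The bound is linear in (i, j) and compatible with the recurrence: writing
   B(i, j) = 3j - i - d (d = 1 for a, d = 0 for b), every term  e * m(i', j')
   of the recurrence satisfies  B(i', j') + 2 v_3(e) >= B(i, j)  (30, 108, 81,
   12, 9, 1 have 3-adic orders 1, 3, 4, 1, 2, 0).  Hence "3^k divides m(i, j)
   whenever 2k <= B(i, j)" propagates from three consecutive rows to the next
   one, and it holds on the three given initial rows by a finite computation. *)

From Stdlib Require Import ZArith Lia.
From mathcomp Require Import all_boot all_order all_algebra.
From mathcomp Require Import ssrZ zify.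
Set Implicit Arguments. Unset Strict Implicit. Unset Printing Implicit Defensive.
Import Order.TTheory GRing.Theory Num.Theory.
Local Open Scope ring_scope.

Definition vp_ge_half (p x B : int) : Prop :=
  forall k : nat, 2 * k%:Z <= B -> (p ^+ k %| x)%Z.

Section HalfValuation.
Variable p : int.

Lemma vp_ge_half0 B : vp_ge_half p 0 B.
Proof. by move=> k _; apply: dvdz0. Qed.

Lemma vp_ge_half_le x B B' : B' <= B -> vp_ge_half p x B -> vp_ge_half p x B'.
Proof. by move=> hB hx k hk; apply: hx; lia. Qed.

Lemma vp_ge_half_add x y B :
  vp_ge_half p x B -> vp_ge_half p y B -> vp_ge_half p (x + y) B.
Proof. by move=> hx hy k hk; rewrite rpredD ?hx ?hy. Qed.

Lemma vp_ge_half_mul c x B (e : nat) : (p ^+ e %| c)%Z ->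
  vp_ge_half p x B -> vp_ge_half p (c * x) (B + 2 * e%:Z).
Proof.
move=> hc hx k hk; case: (leqP k e) => hke.
  by apply: dvdz_mulr; apply: dvdz_trans hc; apply: dvdz_exp2l.
rewrite (_ : k = e + (k - e))%N ?exprD; last by lia.
by apply: dvdz_mul hc _; apply: hx; lia.
Qed.

Lemma vp_ge_half_dvd x B (e : nat) :
  B <= 2 * e%:Z + 1 -> (p ^+ e %| x)%Z -> vp_ge_half p x B.
Proof. by move=> hB hx k hk; apply: dvdz_trans hx; apply: dvdz_exp2l; lia. Qed.

End HalfValuation.

Lemma pi3_ge_vp_ge_half x B : vp_ge_half 3 x B -> pi3_ge x (B %/ 2)%Z.
Proof.
move=> hx; rewrite /pi3_ge /pi3; case: eqP => // /eqP x_neq0.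
case: (lerP (B %/ 2)%Z 0) => hB; first by lia.
have /hx : 2 * `|(B %/ 2)%Z|%N%:Z <= B by lia.
by rewrite dvdzE abszX (_ : `|3%R|%N = 3%N) // pfactor_dvdn ?absz_gt0 //; lia.
Qed.

Section RecurrenceBound.
Variables (r1 r2 r3 : nat -> int) (off : int).
Hypotheses (r1_0 : r1 0 = 0) (r2_0 : r2 0 = 0) (r3_0 : r3 0 = 0).
Let m := mrec r1 r2 r3.

Definition m_bound (i : nat) : Prop :=
  forall j : nat, vp_ge_half 3 (m i j) (3 * j%:Z - i%:Z - off).

Lemma m_j0 i : m i 0 = 0.
Proof. by case: i => [|[|[|[|i]]]]. Qed.

Lemma m_recurrence n j : m n.+4 j.+1 =
  30 * m n.+3 (j.+1 - 1) - 108 * m n.+3 (j.+1 - 2) + 81 * m n.+3 (j.+1 - 3)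
  - 12 * m n.+2 (j.+1 - 1) + 9 * m n.+2 (j.+1 - 2) + m n.+1 (j.+1 - 1).
Proof. by []. Qed.

(* For t > j the truncated index j - t is 0, where m vanishes. *)
Lemma m_bound_sub i j t : m_bound i ->
  vp_ge_half 3 (m i (j - t)) (3 * j%:Z - 3 * t%:Z - i%:Z - off).
Proof.
move=> hi; case: (leqP t j) => htj.
  by apply: vp_ge_half_le (hi (j - t)%N); lia.
by rewrite (_ : j - t = 0)%N ?m_j0; [apply: vp_ge_half0 | lia].
Qed.

Lemma m_bound_step n :
  m_bound n.+1 -> m_bound n.+2 -> m_bound n.+3 -> m_bound n.+4.
Proof.
move=> b1 b2 b3 [|j]; first by rewrite m_j0; apply: vp_ge_half0.
have term (e : nat) c t i : (3 ^+ e %| c)%Z -> m_bound i ->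
    vp_ge_half 3 (c * m i (j.+1 - t))
      (3 * j.+1%:Z - 3 * t%:Z - i%:Z - off + 2 * e%:Z).
  by move=> hc hi; apply: vp_ge_half_mul hc (m_bound_sub hi).
rewrite m_recurrence -!mulNr -[m n.+1 _]mul1r.
repeat apply: vp_ge_half_add.
- by apply: vp_ge_half_le (term 1%N _ 1%N _ _ b3); lia.
- by apply: vp_ge_half_le (term 3%N _ 2%N _ _ b3); lia.
- by apply: vp_ge_half_le (term 4%N _ 3%N _ _ b3); lia.
- by apply: vp_ge_half_le (term 1%N _ 1%N _ _ b2); lia.
- by apply: vp_ge_half_le (term 2%N _ 2%N _ _ b2); lia.
- by apply: vp_ge_half_le (term 0%N _ 1%N _ _ b1); lia.
Qed.

Lemma m_bound_from_rows :
  m_bound 1 -> m_bound 2 -> m_bound 3 -> forall i, (1 <= i)%N -> m_bound i.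
Proof.
move=> b1 b2 b3.
suff triple n : [/\ m_bound n.+1, m_bound n.+2 & m_bound n.+3].
  by case=> // i _; case: (triple i).
elim: n => [|n [c1 c2 c3]]; first by [].
by split=> //; apply: m_bound_step.
Qed.

End RecurrenceBound.

(* The initial rows are checked in binary integers Z, the unary int being
   too slow for entries of size 3^14; the guard B < 0 avoids 3 ^ (B / 2) = 0
   for negative exponents. *)
Section RowCheck.
Local Open Scope Z_scope.

Definition vp3_ge_halfb (z B : Z) : bool :=
  (B <? 0) || (z mod 3 ^ (B / 2) =? 0).

Fixpoint row_checkb (c j : Z) (s : seq Z) : bool :=
  if s is z :: s' then vp3_ge_halfb z (3 * j - c) && row_checkb c (j + 1) s'
  else true.

End RowCheck.

Lemma dvdz_int_of_Z (d z : Z) : Z.divide d z -> (int_of_Z d %| int_of_Z z)%Z.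
Proof. by case=> q ->; apply/dvdzP; exists (int_of_Z q); rewrite -rmorphM. Qed.

Lemma int_of_Z_pow3 (e : nat) : int_of_Z (3 ^ Z.of_nat e) = 3 ^+ e.
Proof.
elim: e => // e IH.
by rewrite Nat2Z.inj_succ Z.pow_succ_r ?exprS -?IH -?rmorphM //; lia.
Qed.

Lemma vp3_ge_halfb_sound z B :
  vp3_ge_halfb z B -> vp_ge_half 3 (int_of_Z z) (int_of_Z B).
Proof.
rewrite /vp3_ge_halfb; case: (Z.ltb_spec B 0) => [hB _ k | hB /Z.eqb_eq hz].
  by lia.
apply: (@vp_ge_half_dvd _ _ _ (Z.to_nat (B / 2))).
  by Z.div_mod_to_equations; lia.
rewrite -int_of_Z_pow3 Z2Nat.id; last by apply: Z.div_pos; lia.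
apply/dvdz_int_of_Z/Z.mod_divide => //.
by apply: Z.pow_nonzero; [|apply: Z.div_pos]; lia.
Qed.

Lemma row_checkb_sound c j0 s : row_checkb c j0 s -> forall n : nat,
  vp_ge_half 3 (int_of_Z (nth Z0 s n)) (3 * (int_of_Z j0 + n%:Z) - int_of_Z c).
Proof.
elim: s j0 => [|z s IH] j0.
  by move=> _ n; rewrite nth_nil; apply: vp_ge_half0.
case/andP=> hz hs [|n] /=.
  by apply: vp_ge_half_le (vp3_ge_halfb_sound hz); lia.
by apply: vp_ge_half_le (IH _ hs n); lia.
Qed.

Lemma row_of_bound s (i : nat) off : row_checkb (Z_of_int (i%:Z + off)) 1 s ->
  forall j : nat, vp_ge_half 3 (row_of s j) (3 * j%:Z - i%:Z - off).
Proof.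
move=> hs [|j]; first by apply: vp_ge_half0.
by apply: vp_ge_half_le (row_checkb_sound (n := j) hs); rewrite Z_of_intK; lia.
Qed.

Lemma a_mat_bound : forall i, (1 <= i)%N ->
  m_bound (row_of row_a1) (row_of row_a2) (row_of row_a3) 1 i.
Proof. by apply: m_bound_from_rows => //; apply: row_of_bound; vm_compute. Qed.

Lemma b_mat_bound : forall i, (1 <= i)%N ->
  m_bound (row_of row_b1) (row_of row_b2) (row_of row_b3) 0 i.
Proof. by apply: m_bound_from_rows => //; apply: row_of_bound; vm_compute. Qed.

Theorem theorem3p1 :
  forall i j : nat, (1 <= i)%N -> (1 <= j)%N ->
    pi3_ge (a_mat i j) ((3 * j%:Z - i%:Z - 1) %/ 2)%Z /\
    pi3_ge (b_mat i j) ((3 * j%:Z - i%:Z) %/ 2)%Z.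
Proof.
move=> i j hi _; split; apply: pi3_ge_vp_ge_half.
- exact: a_mat_bound.
- by apply: vp_ge_half_le (@b_mat_bound i hi j); lia.
Qed.
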